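(* For all integers $m\ge 0$ and $n\ge 1$, $$\int_0^{\pi/2}x^{2m}\cos^{2n}(x)\,dx=(2m)!\,\frac{\binom{2n}{n}}{4^n}\sum_{j=0}^m\frac{(-1)^j\,\zeta_n^{\star}(\{2\}_j)}{2^{2j}(2m-2j+1)!}\left(\frac{\pi}{2}\right)^{2m-2j+1}.$$
   Context: For integers $n\ge1$ and $j\ge0$, the multiple harmonic star sum of depth $j$ and weight $2j$ is $\zeta_n^{\star}(\{2\}_j)=\sum_{n\ge k_1\ge\dots\ge k_j\ge1}\prod_{i=1}^j\frac{1}{k_i^2}$, with $\zeta_n^{\star}(\{2\}_0)=1$. *)

From Stdlib Require Import Reals.
From Coquelicot Require Import Coquelicot.
Open Scope R_scope.

(* zeta_star n j = sum_{n >= k_1 >= ... >= k_j >= 1} prod_i 1/k_i^2,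
   defined by peeling off the outermost index k_1 = k (1 <= k <= n):
   zeta_star n 0 = 1,
   zeta_star n (j+1) = sum_{k=1}^{n} (1/k^2) * zeta_star k j. *)
Fixpoint zeta_star (n j : nat) : R :=
  match j with
  | O => 1
  | S j' => sum_n_m (fun k => / (INR k) ^ 2 * zeta_star k j') 1 n
  end.

From Stdlib Require Import Reals Factorial Lia Lra.
From Coquelicot Require Import Coquelicot.
Open Scope R_scope.

(* Write I(k, q) for the integral of x^k cos^q x over [0, pi/2].  Integrating the
   derivative of a function vanishing at both endpoints gives Wallis' recurrence
   (q + 2) I(0, q + 2) = (q + 1) I(0, q) and the three-term recurrence
   (k+2)(k+1) I(k, q+2) + (q+2)^2 I(k+2, q+2) = (q+2)(q+1) I(k+2, q),
   while I(k, 0) = (pi/2)^(k+1) / (k+1).  The right-hand side obeys the same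
   recurrences, because peeling off the largest index gives
   zeta*_(p+1)({2}_(j+1)) = zeta*_p({2}_(j+1)) + zeta*_(p+1)({2}_j) / (p+1)^2;
   a double induction on (m, n) concludes. *)

Lemma sin_pow2 x : sin x ^ 2 = 1 - cos x ^ 2.
Proof. rewrite <- (sin2_cos2 x); unfold Rsqr; ring. Qed.

Lemma INR_fact_neq_0 k : INR (fact k) <> 0.
Proof. apply not_0_INR, fact_neq_0. Qed.

Lemma sum_n_m_add_scal (u v : nat -> R) c a b :
  sum_n_m (fun k => u k + c * v k) a b = sum_n_m u a b + c * sum_n_m v a b.
Proof.
rewrite <- (sum_n_m_mult_l (K := R_Ring)).
exact (sum_n_m_plus (G := R_AbelianMonoid) u (fun k => c * v k) a b).
Qed.

Lemma is_RInt_lincomb (f g : R -> R) a b c d If Ig :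
  is_RInt f a b If -> is_RInt g a b Ig ->
  is_RInt (fun x => c * f x + d * g x) a b (c * If + d * Ig).
Proof.
intros Hf Hg.
exact (is_RInt_plus (V := R_NormedModule) _ _ _ _ _ _
         (is_RInt_scal _ _ _ c _ Hf) (is_RInt_scal _ _ _ d _ Hg)).
Qed.

Lemma is_RInt_derive_eq (F f : R -> R) a b I :
  is_RInt f a b I ->
  (forall x, is_derive F x (f x)) -> (forall x, continuous f x) ->
  I = F b - F a.
Proof.
intros HI dF cf.
rewrite <- (is_RInt_unique (V := R_CompleteNormedModule) _ _ _ _ HI).
apply (is_RInt_unique (V := R_CompleteNormedModule)), (is_RInt_derive (V := R_CompleteNormedModule)).
- intros x _; apply dF.
- intros x _; apply cf.
Qed.

Lemma is_derive_cos_moment_wallis_kernel q (x : R) :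
  is_derive (fun x => cos x ^ (q + 1) * sin x) x
    (INR (q + 2) * cos x ^ (q + 2) - INR (q + 1) * cos x ^ q).
Proof.
auto_derive; [trivial|].
replace (Nat.pred (q + 1)) with q by lia.
rewrite !pow_add, !plus_INR; simpl INR.
ring_simplify; rewrite sin_pow2; ring.
Qed.

(* The derivative of x^(k+2) cos^(q+2) x with the sign of its second term
   flipped: then the x^(k+1) cos^(q+1) x sin x terms cancel in the derivative. *)
Lemma is_derive_cos_moment_rec_kernel k q (x : R) :
  is_derive
    (fun x => INR (k + 2) * x ^ (k + 1) * cos x ^ (q + 2)
              + INR (q + 2) * x ^ (k + 2) * cos x ^ (q + 1) * sin x) x
    (INR ((k + 2) * (k + 1)) * (x ^ k * cos x ^ (q + 2))
     - INR ((q + 2) * (q + 1)) * (x ^ (k + 2) * cos x ^ q)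
     + INR ((q + 2) * (q + 2)) * (x ^ (k + 2) * cos x ^ (q + 2))).
Proof.
auto_derive; [trivial|].
replace (Nat.pred (k + 1)) with k by lia.
replace (Nat.pred (k + 2)) with (k + 1)%nat by lia.
replace (Nat.pred (q + 1)) with q by lia.
replace (Nat.pred (q + 2)) with (q + 1)%nat by lia.
rewrite !pow_add, !mult_INR, !plus_INR; simpl INR.
ring_simplify; rewrite sin_pow2; ring.
Qed.

Definition cos_moment (k q : nat) : R :=
  RInt (fun x => x ^ k * cos x ^ q) 0 (PI / 2).

Lemma continuous_pow_cos_pow k q (x : R) : continuous (fun x => x ^ k * cos x ^ q) x.
Proof. apply (ex_derive_continuous (V := R_NormedModule)); auto_derive; trivial. Qed.

Lemma is_RInt_cos_moment k q :
  is_RInt (fun x => x ^ k * cos x ^ q) 0 (PI / 2) (cos_moment k q).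
Proof.
apply (RInt_correct (V := R_CompleteNormedModule)), (ex_RInt_continuous (V := R_CompleteNormedModule)).
intros x _; apply continuous_pow_cos_pow.
Qed.

Lemma cos_moment_0 k : cos_moment k 0 = (PI / 2) ^ (k + 1) / INR (k + 1).
Proof.
assert (k1 : INR (k + 1) <> 0) by (apply not_0_INR; lia).
rewrite (is_RInt_derive_eq (fun x => x ^ (k + 1) / INR (k + 1)) _ _ _ _
           (is_RInt_cos_moment k 0)).
- rewrite pow_i by lia; field; exact k1.
- intros x; auto_derive; [trivial|].
  replace (Nat.pred (k + 1)) with k by lia; simpl; field; exact k1.
- intros x; apply continuous_pow_cos_pow.
Qed.

Lemma cos_moment_wallis q :
  INR (q + 2) * cos_moment 0 (q + 2) = INR (q + 1) * cos_moment 0 q.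
Proof.
enough (E : INR (q + 2) * cos_moment 0 (q + 2) + - INR (q + 1) * cos_moment 0 q
            = cos (PI / 2) ^ (q + 1) * sin (PI / 2) - cos 0 ^ (q + 1) * sin 0).
{ rewrite cos_PI2, sin_0, pow_i in E by lia; lra. }
eapply (is_RInt_derive_eq (fun x => cos x ^ (q + 1) * sin x));
  [| apply is_derive_cos_moment_wallis_kernel |].
- eapply is_RInt_ext; [|apply is_RInt_lincomb; apply is_RInt_cos_moment].
  intros x _; simpl; ring.
- intros x; apply (ex_derive_continuous (V := R_NormedModule)); auto_derive; trivial.
Qed.

Lemma cos_moment_rec k q :
  INR ((k + 2) * (k + 1)) * cos_moment k (q + 2)
  + INR ((q + 2) * (q + 2)) * cos_moment (k + 2) (q + 2)
  = INR ((q + 2) * (q + 1)) * cos_moment (k + 2) q.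
Proof.
set (H := fun x => INR (k + 2) * x ^ (k + 1) * cos x ^ (q + 2)
                   + INR (q + 2) * x ^ (k + 2) * cos x ^ (q + 1) * sin x).
enough (E : INR ((k + 2) * (k + 1)) * cos_moment k (q + 2)
            + 1 * (- INR ((q + 2) * (q + 1)) * cos_moment (k + 2) q
                   + INR ((q + 2) * (q + 2)) * cos_moment (k + 2) (q + 2))
            = H (PI / 2) - H 0).
{ unfold H in E; rewrite cos_PI2, sin_0, !pow_i in E by lia; lra. }
eapply (is_RInt_derive_eq H); [| apply is_derive_cos_moment_rec_kernel |].
- eapply is_RInt_ext;
    [|apply is_RInt_lincomb; [|apply is_RInt_lincomb]; apply is_RInt_cos_moment].
  intros x _; simpl; ring.
- intros x; apply (ex_derive_continuous (V := R_NormedModule)); auto_derive; trivial.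
Qed.

Lemma zeta_star_0_S j : zeta_star 0 (S j) = 0.
Proof. simpl; rewrite sum_n_m_zero by lia; reflexivity. Qed.

Lemma zeta_star_S_S p j :
  zeta_star (S p) (S j) = zeta_star p (S j) + / INR (S p) ^ 2 * zeta_star (S p) j.
Proof. simpl zeta_star at 1; rewrite sum_n_Sm by lia; reflexivity. Qed.

Definition zeta_term (m n j : nat) : R :=
  (-1) ^ j * zeta_star n j / (2 ^ (2 * j) * INR (fact (2 * m - 2 * j + 1)))
  * (PI / 2) ^ (2 * m - 2 * j + 1).

Definition zeta_sum (m n : nat) : R := sum_n_m (zeta_term m n) 0 m.

Lemma zeta_sum_0_r m : zeta_sum m 0 = (PI / 2) ^ (2 * m + 1) / INR (fact (2 * m + 1)).
Proof.
unfold zeta_sum; rewrite sum_Sn_m by lia.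
rewrite (sum_n_m_ext_loc _ (fun _ => zero)), sum_n_m_const_zero.
- unfold zeta_term; simpl; rewrite Nat.sub_0_r.
  unfold plus, zero; simpl; field; apply INR_fact_neq_0.
- intros [|j] Hj; [lia|].
  unfold zeta_term; rewrite zeta_star_0_S; unfold zero; simpl; field.
  split; [apply INR_fact_neq_0 | apply pow_nonzero; lra].
Qed.

Lemma zeta_sum_0_l n : zeta_sum 0 n = PI / 2.
Proof. unfold zeta_sum, zeta_term; rewrite sum_n_n; simpl; field. Qed.

Lemma zeta_term_S_S m p j :
  zeta_term (S m) (S p) (S j)
  = zeta_term (S m) p (S j) - zeta_term m (S p) j / (4 * INR (S p) ^ 2).
Proof.
assert (p1 : INR (S p) <> 0) by (apply not_0_INR; lia).
unfold zeta_term; rewrite zeta_star_S_S.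
replace (2 * S m - 2 * S j + 1)%nat with (2 * m - 2 * j + 1)%nat by lia.
replace (2 * S j)%nat with (S (S (2 * j))) by lia.
simpl pow; field.
repeat split; auto; try apply INR_fact_neq_0; apply pow_nonzero; lra.
Qed.

Lemma zeta_sum_S_S m p :
  zeta_sum (S m) (S p) = zeta_sum (S m) p - zeta_sum m (S p) / (4 * INR (S p) ^ 2).
Proof.
assert (p1 : INR (S p) <> 0) by (apply not_0_INR; lia).
unfold zeta_sum; rewrite !(sum_Sn_m _ 0 (S m)), <- !sum_n_m_S by lia.
rewrite (sum_n_m_ext _ (fun j => zeta_term (S m) p (S j)
                                  + (- / (4 * INR (S p) ^ 2)) * zeta_term m (S p) j)).
- rewrite sum_n_m_add_scal.
  change (zeta_term (S m) (S p) 0) with (zeta_term (S m) p 0).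
  unfold plus; simpl; field; exact p1.
- intros j; rewrite zeta_term_S_S; cbn -[INR]; field; exact p1.
Qed.

Definition wallis_ratio (n : nat) : R := Binomial.C (2 * n) n / 4 ^ n.

Lemma wallis_ratio_S p : INR (2 * p + 2) * wallis_ratio (S p) = INR (2 * p + 1) * wallis_ratio p.
Proof.
unfold wallis_ratio, Binomial.C.
replace (2 * S p - S p)%nat with (S p) by lia.
replace (2 * p - p)%nat with p by lia.
replace (2 * S p)%nat with (S (S (2 * p))) by lia.
replace (2 * p + 2)%nat with (S (S (2 * p))) by lia.
replace (2 * p + 1)%nat with (S (2 * p)) by lia.
rewrite !fact_simpl, !mult_INR, !S_INR, mult_INR; simpl pow; simpl (INR 2).
pose proof (INR_fact_neq_0 p); pose proof (INR_fact_neq_0 (2 * p)); pose proof (pos_INR p).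
field; repeat split; try lra; apply pow_nonzero; lra.
Qed.

Definition closed_form (m n : nat) : R := INR (fact (2 * m)) * wallis_ratio n * zeta_sum m n.

Lemma closed_form_0_r m : closed_form m 0 = (PI / 2) ^ (2 * m + 1) / INR (2 * m + 1).
Proof.
unfold closed_form, wallis_ratio, Binomial.C; rewrite zeta_sum_0_r.
replace (2 * m + 1)%nat with (S (2 * m)) by lia.
rewrite fact_simpl, mult_INR; simpl.
pose proof (INR_fact_neq_0 (2 * m)).
assert (INR (S (2 * m)) <> 0) by (apply not_0_INR; lia).
field; auto.
Qed.

Lemma closed_form_wallis p :
  INR (2 * p + 2) * closed_form 0 (S p) = INR (2 * p + 1) * closed_form 0 p.
Proof.
unfold closed_form; rewrite !zeta_sum_0_l.
transitivity (INR (2 * p + 2) * wallis_ratio (S p) * (INR (fact (2 * 0)) * (PI / 2)));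
  [ring | rewrite wallis_ratio_S; ring].
Qed.

Lemma closed_form_rec m p :
  INR ((2 * m + 2) * (2 * m + 1)) * closed_form m (S p)
  + INR ((2 * p + 2) * (2 * p + 2)) * closed_form (S m) (S p)
  = INR ((2 * p + 2) * (2 * p + 1)) * closed_form (S m) p.
Proof.
assert (p1 : INR (S p) <> 0) by (apply not_0_INR; lia).
assert (p2 : INR (2 * p + 1) <> 0) by (apply not_0_INR; lia).
assert (Hw : wallis_ratio p = INR (2 * p + 2) / INR (2 * p + 1) * wallis_ratio (S p))
  by (apply (Rmult_eq_reg_l (INR (2 * p + 1))); [rewrite <- wallis_ratio_S; field |]; exact p2).
unfold closed_form; rewrite Hw, zeta_sum_S_S.
replace (2 * S m)%nat with (S (S (2 * m))) by lia.
rewrite !fact_simpl, !mult_INR, !S_INR, !plus_INR, !mult_INR in *; simpl INR in *.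
field; split; assumption.
Qed.

Lemma cos_moment_closed_form m n : cos_moment (2 * m) (2 * n) = closed_form m n.
Proof.
revert n; induction m as [|m IHm]; intros n; induction n as [|p IHn];
  try (rewrite cos_moment_0, closed_form_0_r; reflexivity).
- apply (Rmult_eq_reg_l (INR (2 * p + 2))); [|apply not_0_INR; lia].
  rewrite closed_form_wallis, <- IHn.
  replace (2 * S p)%nat with (2 * p + 2)%nat by lia.
  apply cos_moment_wallis.
- apply (Rmult_eq_reg_l (INR ((2 * p + 2) * (2 * p + 2)))); [|apply not_0_INR; lia].
  pose proof (cos_moment_rec (2 * m) (2 * p)) as Rec.
  pose proof (closed_form_rec m p) as RecG.
  rewrite <- IHm, <- IHn in RecG.
  replace (2 * S m)%nat with (2 * m + 2)%nat in * by lia.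
  replace (2 * S p)%nat with (2 * p + 2)%nat in * by lia.
  lra.
Qed.

Theorem mainTheorem11 (m n : nat) (hn : (1 <= n)%nat) :
  RInt (fun x => x ^ (2 * m) * cos x ^ (2 * n)) 0 (PI / 2)
  = INR (fact (2 * m)) * (Binomial.C (2 * n) n / 4 ^ n) *
    sum_n_m (fun j =>
      (-1) ^ j * zeta_star n j
      / (2 ^ (2 * j) * INR (fact (2 * m - 2 * j + 1)))
      * (PI / 2) ^ (2 * m - 2 * j + 1)) 0 m.
Proof. exact (cos_moment_closed_form m n). Qed.
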